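(* For a prime $N\ge3$, \[ \frac1{N-1}\sum_{w=1}^{N-1}\frac1{N^2}\sum_{h=1}^{N-1}\frac{\cot^2(\pi hw/N)}{h^2}=\frac{N-2}{3N^2}H_{N-1}(2)\le\frac{\pi^2}{18N}. \]
   Context: $H_n(a)=\sum_{h=1}^n h^{-a}$ denotes the harmonic number of order $a$. *)

From Stdlib Require Import Reals Znumtheory.
Open Scope R_scope.

Definition cot (x : R) : R := cos x / sin x.

Fixpoint sum1 (n : nat) (f : nat -> R) : R :=
  match n with
  | O => 0
  | S m => sum1 m f + f (S m)
  end.

(* Harmonic number of order a (a real): H_n(a) = sum_{h=1}^n h^{-a};
   here we only need integer order, stated for natural a via pow. *)
Definition H (n : nat) (a : nat) : R := sum1 n (fun h => / (INR h) ^ a).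

(* For 0 < h < N with gcd(h, N) = 1 and x = pi h w / N, the discrete Fourier
   expansion cot x = -(2/N) sum_j j sin(2 j x) squares, after summing over w and
   using the orthogonality of the sines sin(2 pi j h w / N) (multiplication by h
   permutes the nonzero residues mod N), to sum_w cot^2(pi h w / N) = (N-1)(N-2)/3,
   independently of h.  Summing against 1/h^2 gives the identity.  The same
   identity for h = 1 and N = 2m+1, with csc^2 = 1 + cot^2, symmetry w -> N - w
   and sin y < y, gives H_m(2) <= pi^2/6, whence the bound. *)

From Stdlib Require Import Reals ZArith Znumtheory Lia Lra.
Open Scope R_scope.

Lemma sum1_S n f : sum1 (S n) f = sum1 n f + f (S n).
Proof. reflexivity. Qed.

Lemma sum1_ext n f g :
  (forall k, (1 <= k <= n)%nat -> f k = g k) -> sum1 n f = sum1 n g.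
Proof.
  induction n as [|n IH]; intros Hfg; simpl; [reflexivity|].
  rewrite Hfg by lia. f_equal. apply IH. intros; apply Hfg; lia.
Qed.

Lemma sum1_le n f g :
  (forall k, (1 <= k <= n)%nat -> f k <= g k) -> sum1 n f <= sum1 n g.
Proof.
  induction n as [|n IH]; intros Hfg; simpl; [lra|].
  apply Rplus_le_compat; [apply IH; intros; apply Hfg|apply Hfg]; lia.
Qed.

Lemma sum1_add n f g : sum1 n (fun k => f k + g k) = sum1 n f + sum1 n g.
Proof. induction n as [|n IH]; simpl; [ring|rewrite IH; ring]. Qed.

Lemma sum1_sub n f g : sum1 n (fun k => f k - g k) = sum1 n f - sum1 n g.
Proof. induction n as [|n IH]; simpl; [ring|rewrite IH; ring]. Qed.

Lemma sum1_scal n c f : sum1 n (fun k => c * f k) = c * sum1 n f.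
Proof. induction n as [|n IH]; simpl; [ring|rewrite IH; ring]. Qed.

Lemma sum1_const n c : sum1 n (fun _ => c) = INR n * c.
Proof. induction n as [|n IH]; [simpl; ring|rewrite sum1_S, IH, S_INR; ring]. Qed.

Lemma sum1_swap n m (F : nat -> nat -> R) :
  sum1 n (fun i => sum1 m (fun j => F i j)) = sum1 m (fun j => sum1 n (fun i => F i j)).
Proof.
  induction n as [|n IH]; simpl.
  - rewrite sum1_const. ring.
  - rewrite IH, <- sum1_add. reflexivity.
Qed.

Lemma sum1_mul n f g :
  sum1 n f * sum1 n g = sum1 n (fun j => sum1 n (fun l => f j * g l)).
Proof.
  rewrite Rmult_comm, <- (sum1_scal n (sum1 n g) f).
  apply sum1_ext; intros. rewrite Rmult_comm, <- sum1_scal. reflexivity.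
Qed.

Definition delta (a b : nat) : R := if Nat.eqb a b then 1 else 0.

Lemma sum1_delta n f t :
  (1 <= t <= n)%nat -> sum1 n (fun l => f l * delta l t) = f t.
Proof.
  induction n as [|n IH]; intros Ht; [lia|]. rewrite sum1_S. unfold delta at 2.
  destruct (Nat.eqb_spec (S n) t) as [<-|Hne].
  - rewrite (sum1_ext _ _ (fun _ => 0)), sum1_const; [ring|].
    intros k Hk. unfold delta. destruct (Nat.eqb_spec k (S n)); [lia|ring].
  - rewrite IH by lia. ring.
Qed.

Lemma sum1_id n : sum1 n INR = INR n * (INR n + 1) / 2.
Proof. induction n as [|n IH]; [simpl; field|rewrite sum1_S, IH, S_INR; field]. Qed.

Lemma sum1_sq n :
  sum1 n (fun j => INR j * INR j) = INR n * (INR n + 1) * (2 * INR n + 1) / 6.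
Proof. induction n as [|n IH]; [simpl; field|rewrite sum1_S, IH, S_INR; field]. Qed.

Lemma sum1_split a b f : sum1 (a + b) f = sum1 a f + sum1 b (fun k => f (a + k)%nat).
Proof.
  induction b as [|b IH]; simpl; [rewrite Nat.add_0_r; ring|].
  rewrite Nat.add_succ_r, sum1_S, IH. ring.
Qed.

Lemma sum1_shift n f : sum1 (S n) f = f 1%nat + sum1 n (fun k => f (S k)).
Proof. induction n as [|n IH]; [simpl; ring|rewrite sum1_S, IH, sum1_S; ring]. Qed.

Lemma sum1_rev n f : sum1 n f = sum1 n (fun k => f (S n - k)%nat).
Proof.
  induction n as [|n IH]; [reflexivity|].
  rewrite sum1_S, IH, (sum1_shift n (fun k => f (S (S n) - k)%nat)).
  replace (S (S n) - 1)%nat with (S n) by lia. apply Rplus_comm.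
Qed.

Lemma sum1_symmetric m f :
  (forall k, (1 <= k <= m)%nat -> f (2 * m + 1 - k)%nat = f k) ->
  sum1 (2 * m) f = 2 * sum1 m f.
Proof.
  intros Hsym. replace (2 * m)%nat with (m + m)%nat by lia.
  rewrite sum1_split, (sum1_rev m (fun k => f (m + k)%nat)).
  rewrite (sum1_ext m (fun k => f (m + (S m - k)))%nat f); [ring|].
  intros k Hk. rewrite <- (Hsym k) by lia. f_equal. lia.
Qed.

Lemma periodic_Z (f : R -> R) :
  (forall x k, f (x + 2 * INR k * PI) = f x) ->
  forall x m, f (x + 2 * IZR m * PI) = f x.
Proof.
  intros Hper x m. destruct (Z.le_gt_cases 0 m).
  - rewrite <- (Z2Nat.id m), <- INR_IZR_INZ by lia. apply Hper.
  - rewrite <- (Hper _ (Z.to_nat (- m))), INR_IZR_INZ, Z2Nat.id, opp_IZR by lia.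
    f_equal; ring.
Qed.

Lemma sin_period_Z x m : sin (x + 2 * IZR m * PI) = sin x.
Proof. exact (periodic_Z sin sin_period x m). Qed.

Lemma cos_period_Z x m : cos (x + 2 * IZR m * PI) = cos x.
Proof. exact (periodic_Z cos cos_period x m). Qed.

Lemma sin_PI_div_neq0 (N : nat) (m : Z) :
  (0 < N)%nat -> ~ (Z.of_nat N | m)%Z -> sin (PI * IZR m / INR N) <> 0.
Proof.
  intros HN Hndvd Hsin. apply sin_eq_0_0 in Hsin as [k Hk].
  assert (HNpos : 0 < INR N) by (apply lt_0_INR; lia). pose proof PI_RGT_0 as Hpi.
  apply Hndvd. exists k. apply eq_IZR. rewrite mult_IZR, <- INR_IZR_INZ.
  apply (Rmult_eq_reg_l (PI / INR N)); [|apply Rgt_not_eq, Rdiv_lt_0_compat; lra].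
  transitivity (PI * IZR m / INR N); [field; lra|]. rewrite Hk. field. lra.
Qed.

Lemma sum_cos_mul n b :
  2 * sin (b / 2) * sum1 n (fun w => cos (INR w * b))
  = sin ((INR n + / 2) * b) - sin (b / 2).
Proof.
  induction n as [|n IH].
  - simpl. replace ((0 + / 2) * b) with (b / 2) by field. ring.
  - rewrite sum1_S, Rmult_plus_distr_l, IH, S_INR.
    set (y := (INR n + 1) * b).
    replace ((INR n + / 2) * b) with (y - b / 2) by (unfold y; field).
    replace ((INR n + 1 + / 2) * b) with (y + b / 2) by (unfold y; field).
    rewrite sin_plus, sin_minus. ring.
Qed.

Lemma sum_mul_sin_double n x :
  4 * sin x ^ 2 * sum1 n (fun j => INR j * sin (2 * INR j * x))
  = sin (2 * INR n * x) - 2 * sin x * INR n * cos ((2 * INR n + 1) * x).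
Proof.
  induction n as [|n IH].
  - simpl. replace (2 * 0 * x) with 0 by ring. rewrite sin_0. ring.
  - rewrite sum1_S, Rmult_plus_distr_l, IH, S_INR.
    set (y := (2 * INR n + 1) * x).
    replace (2 * (INR n + 1) * x) with (y + x) by (unfold y; ring).
    replace (2 * INR n * x) with (y - x) by (unfold y; ring).
    replace ((2 * (INR n + 1) + 1) * x) with (y + 2 * x) by (unfold y; ring).
    rewrite sin_plus, sin_minus, cos_plus, sin_2a, cos_2a_sin. ring.
Qed.

Definition dvd_ind (n : nat) (m : Z) : R :=
  if Zdivide_dec (Z.of_nat n) m then 1 else 0.

Lemma sum_cos_roots (N : nat) (m : Z) : (1 <= N)%nat ->
  sum1 (N - 1) (fun w => cos (INR w * (2 * PI * IZR m / INR N)))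
  = INR N * dvd_ind N m - 1.
Proof.
  intros HN. assert (HNpos : 0 < INR N) by (apply lt_0_INR; lia).
  set (b := 2 * PI * IZR m / INR N). unfold dvd_ind.
  destruct (Zdivide_dec (Z.of_nat N) m) as [[q Hq]|Hndvd].
  - rewrite (sum1_ext _ _ (fun _ => 1)).
    { rewrite sum1_const, minus_INR by lia. simpl. ring. }
    intros w _. unfold b. subst m.
    replace (INR w * (2 * PI * IZR (q * Z.of_nat N) / INR N))
      with (0 + 2 * IZR (Z.of_nat w * q) * PI)
      by (rewrite !mult_IZR, <- !INR_IZR_INZ; field; lra).
    rewrite cos_period_Z. apply cos_0.
  - assert (Hs : sin (b / 2) <> 0).
    { replace (b / 2) with (PI * IZR m / INR N) by (unfold b; field; lra).
      apply sin_PI_div_neq0; [lia|assumption]. }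
    apply (Rmult_eq_reg_l (2 * sin (b / 2))); [|lra].
    rewrite sum_cos_mul, minus_INR by lia. simpl INR.
    replace ((INR N - 1 + / 2) * b) with (- (b / 2) + 2 * IZR m * PI)
      by (unfold b; field; lra).
    rewrite sin_period_Z, sin_neg. ring.
Qed.

(* When [N x] is a multiple of pi, the boundary terms of [sum_mul_sin_double]
   reduce to multiples of sin x cos x. *)
Lemma cot_expansion (N m : nat) x :
  (1 <= N)%nat -> INR N * x = PI * INR m -> sin x <> 0 ->
  cot x = -2 / INR N * sum1 (N - 1) (fun j => INR j * sin (2 * INR j * x)).
Proof.
  intros HN Hx Hs. assert (HNpos : 0 < INR N) by (apply lt_0_INR; lia).
  pose proof (sum_mul_sin_double (N - 1) x) as E.
  rewrite minus_INR in E by lia. simpl INR in E.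
  replace (2 * (INR N - 1) * x) with (- (2 * x) + 2 * INR m * PI) in E by nra.
  replace ((2 * (INR N - 1) + 1) * x) with (- x + 2 * INR m * PI) in E by nra.
  rewrite sin_period, cos_period, sin_neg, cos_neg, sin_2a in E.
  assert (Hsum : sum1 (N - 1) (fun j => INR j * sin (2 * INR j * x))
                 = - INR N * cos x / (2 * sin x)).
  { apply (Rmult_eq_reg_l (4 * sin x ^ 2)); [rewrite E; field; assumption|].
    apply Rmult_integral_contrapositive; split; [lra|apply pow_nonzero; assumption]. }
  rewrite Hsum. unfold cot. field. split; [assumption|lra].
Qed.

Lemma Zdivide_small (n a : Z) : (n | a)%Z -> (Z.abs a < n)%Z -> a = 0%Z.
Proof.
  intros Hdvd Hlt. destruct (Z.eq_dec a 0) as [|Ha]; [assumption|].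
  pose proof (Zdivide_bounds _ _ Hdvd Ha). lia.
Qed.

Lemma dvd_ind_delta N m a b :
  ((Z.of_nat N | m)%Z <-> a = b) -> dvd_ind N m = delta a b.
Proof.
  intros Hiff. unfold dvd_ind, delta.
  destruct (Zdivide_dec (Z.of_nat N) m), (Nat.eqb_spec a b); tauto.
Qed.

Section CotangentSquareSum.

Variables N h : nat.
Hypothesis HN : (1 <= N)%nat.
Hypothesis Hcoprime : rel_prime (Z.of_nat N) (Z.of_nat h).

Local Notation angle w := (PI * INR h * INR w / INR N).

Let HNpos : 0 < INR N.
Proof. apply lt_0_INR; lia. Qed.

Lemma dvd_mul_coprime_iff m :
  (Z.of_nat N | m * Z.of_nat h)%Z <-> (Z.of_nat N | m)%Z.
Proof.
  split; intros Hdvd.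
  - apply (Gauss _ (Z.of_nat h)); [rewrite Z.mul_comm|]; assumption.
  - apply Z.divide_mul_l. assumption.
Qed.

Lemma sin_angle_neq0 w : (1 <= w <= N - 1)%nat -> sin (angle w) <> 0.
Proof.
  intros Hw.
  replace (angle w) with (PI * IZR (Z.of_nat w * Z.of_nat h) / INR N)
    by (rewrite mult_IZR, <- !INR_IZR_INZ; field; lra).
  apply sin_PI_div_neq0; [lia|]. intros Hdvd.
  rewrite dvd_mul_coprime_iff in Hdvd. apply Zdivide_small in Hdvd; lia.
Qed.

Lemma sum_sin_mul_sin j l :
  (1 <= j <= N - 1)%nat -> (1 <= l <= N - 1)%nat ->
  sum1 (N - 1) (fun w => sin (2 * INR j * angle w) * sin (2 * INR l * angle w))
  = INR N / 2 * (delta l j - delta l (N - j)).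
Proof.
  intros Hj Hl.
  set (m1 := ((Z.of_nat j - Z.of_nat l) * Z.of_nat h)%Z).
  set (m2 := ((Z.of_nat j + Z.of_nat l) * Z.of_nat h)%Z).
  rewrite (sum1_ext _ _ (fun w => / 2 * (cos (INR w * (2 * PI * IZR m1 / INR N))
                                    - cos (INR w * (2 * PI * IZR m2 / INR N))))).
  2:{ intros w _. unfold m1, m2.
      rewrite !mult_IZR, minus_IZR, plus_IZR, <- !INR_IZR_INZ.
      set (u := 2 * INR j * angle w). set (v := 2 * INR l * angle w).
      replace (INR w * (2 * PI * ((INR j - INR l) * INR h) / INR N)) with (u - v)
        by (unfold u, v; field; lra).
      replace (INR w * (2 * PI * ((INR j + INR l) * INR h) / INR N)) with (u + v)
        by (unfold u, v; field; lra).
      rewrite cos_minus, cos_plus. field. }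
  rewrite sum1_scal, sum1_sub, !sum_cos_roots by lia.
  assert (Hm1 : dvd_ind N m1 = delta l j).
  { apply dvd_ind_delta. unfold m1. rewrite dvd_mul_coprime_iff.
    split; intros Hdvd.
    - apply Zdivide_small in Hdvd; lia.
    - subst l. rewrite Z.sub_diag. apply Z.divide_0_r. }
  assert (Hm2 : dvd_ind N m2 = delta l (N - j)).
  { apply dvd_ind_delta. unfold m2. rewrite dvd_mul_coprime_iff.
    split; intros Hdvd.
    - enough (Z.of_nat j + Z.of_nat l - Z.of_nat N = 0)%Z by lia.
      apply (Zdivide_small (Z.of_nat N)); [|lia].
      apply Z.divide_sub_r; [assumption|apply Z.divide_refl].
    - subst l. replace (Z.of_nat j + Z.of_nat (N - j))%Z with (Z.of_nat N) by lia.
      apply Z.divide_refl. }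
  rewrite Hm1, Hm2. field.
Qed.

Lemma sum_cot_sq :
  sum1 (N - 1) (fun w => cot (angle w) ^ 2) = (INR N - 1) * (INR N - 2) / 3.
Proof.
  pose proof PI_RGT_0 as Hpi.
  set (F j w := INR j * sin (2 * INR j * angle w)).
  rewrite (sum1_ext _ _ (fun w => 4 / INR N ^ 2 *
             sum1 (N - 1) (fun j => sum1 (N - 1) (fun l => F j w * F l w)))).
  2:{ intros w Hw.
      rewrite (cot_expansion N (h * w)), <- sum1_mul; [unfold F; field; lra|lia| |].
      - rewrite mult_INR. field. lra.
      - apply sin_angle_neq0, Hw. }
  rewrite sum1_scal, sum1_swap.
  rewrite (sum1_ext _ _ (fun j => INR N * (INR j * INR j) + - (INR N ^ 2 / 2) * INR j)).
  2:{ intros j Hj. rewrite sum1_swap.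
      rewrite (sum1_ext _ _ (fun l => INR j * INR N / 2 * INR l * delta l j
                                     - INR j * INR N / 2 * INR l * delta l (N - j))).
      - rewrite sum1_sub, !(sum1_delta _ (fun l => INR j * INR N / 2 * INR l)),
          minus_INR by lia.
        field.
      - intros l Hl. unfold F.
        rewrite (sum1_ext _ _ (fun w => INR j * INR l *
                   (sin (2 * INR j * angle w) * sin (2 * INR l * angle w))))
          by (intros; ring).
        rewrite sum1_scal, sum_sin_mul_sin by lia. field. }
  rewrite sum1_add, !sum1_scal, sum1_sq, sum1_id, minus_INR by lia. simpl INR.
  field. lra.
Qed.

End CotangentSquareSum.

Lemma inv_sin_sq x : sin x <> 0 -> / sin x ^ 2 = 1 + cot x ^ 2.
Proof.
  intros Hs. pose proof (sin2_cos2 x) as E. unfold Rsqr in E. unfold cot.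
  transitivity ((sin x * sin x + cos x * cos x) / sin x ^ 2);
    [rewrite E|]; field; assumption.
Qed.

Lemma sum_csc_sq M : (1 <= M)%nat ->
  sum1 (M - 1) (fun w => / sin (PI * INR w / INR M) ^ 2) = (INR M ^ 2 - 1) / 3.
Proof.
  intros HM. assert (HMpos : 0 < INR M) by (apply lt_0_INR; lia).
  assert (Hcop : rel_prime (Z.of_nat M) (Z.of_nat 1))
    by apply rel_prime_sym, rel_prime_1.
  rewrite (sum1_ext _ _ (fun w => 1 + cot (PI * INR 1 * INR w / INR M) ^ 2)).
  - rewrite sum1_add, sum1_const, sum_cot_sq, minus_INR by assumption.
    simpl. field.
  - intros w Hw. rewrite <- inv_sin_sq by exact (sin_angle_neq0 M 1 HM Hcop w Hw).
    simpl INR. rewrite Rmult_1_r. reflexivity.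
Qed.

Lemma inv_sq_le_inv_sin_sq y : 0 < y -> 0 < sin y -> / y ^ 2 <= / sin y ^ 2.
Proof.
  intros Hy Hs. pose proof (sin_lt_x y Hy).
  apply Rinv_le_contravar; nra.
Qed.

Lemma sin_PI_frac_pos w M : (0 < w < M)%nat -> 0 < sin (PI * INR w / INR M).
Proof.
  intros Hw. pose proof PI_RGT_0 as Hpi.
  assert (INR w < INR M) by (apply lt_INR; lia).
  assert (0 < INR w) by (apply lt_0_INR; lia).
  apply sin_gt_0; [apply Rdiv_lt_0_compat; nra|].
  apply (Rmult_lt_reg_r (INR M)); [lra|]. field_simplify; nra.
Qed.

(* Take N = 2m+1 and h = 1 in [sum_cot_sq]: the csc^2 values at the first m
   multiples of pi/N add up to (N^2-1)/6, and each dominates (N/(pi k))^2. *)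
Lemma harmonic2_le m : H m 2 <= PI ^ 2 / 6.
Proof.
  pose proof PI_RGT_0 as Hpi.
  set (M := (2 * m + 1)%nat). set (csc2 w := / sin (PI * INR w / INR M) ^ 2).
  assert (HMpos : 0 < INR M) by (apply lt_0_INR; unfold M; lia).
  assert (Hhalf : sum1 m csc2 = (INR M ^ 2 - 1) / 6).
  { assert (Hall := sum_csc_sq M ltac:(unfold M; lia)).
    replace (M - 1)%nat with (2 * m)%nat in Hall by (unfold M; lia).
    fold csc2 in Hall. rewrite sum1_symmetric in Hall; [lra|].
    intros k Hk. unfold csc2. rewrite <- sin_PI_x, minus_INR by (unfold M; lia).
    do 3 f_equal. fold M. field. lra. }
  assert (Hle : (INR M / PI) ^ 2 * H m 2 <= sum1 m csc2).
  { unfold H. rewrite <- sum1_scal. apply sum1_le. intros k Hk.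
    assert (1 <= INR k) by (apply (le_INR 1); lia).
    replace ((INR M / PI) ^ 2 * / INR k ^ 2) with (/ (PI * INR k / INR M) ^ 2)
      by (field; lra).
    apply inv_sq_le_inv_sin_sq; [apply Rdiv_lt_0_compat; nra|].
    apply sin_PI_frac_pos; unfold M; lia. }
  assert (Hbound : H m 2 <= PI ^ 2 / 6 * (1 - / INR M ^ 2)).
  { apply (Rmult_le_reg_l ((INR M / PI) ^ 2)).
    { apply pow_lt, Rdiv_lt_0_compat; lra. }
    replace ((INR M / PI) ^ 2 * (PI ^ 2 / 6 * (1 - / INR M ^ 2)))
      with ((INR M ^ 2 - 1) / 6) by (field; lra).
    lra. }
  assert (0 < / INR M ^ 2) by (apply Rinv_0_lt_compat, pow_lt; lra).
  nra.
Qed.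

Lemma weighted_cot_sq_mean N : prime (Z.of_nat N) ->
  / INR (N - 1) *
    sum1 (N - 1) (fun w =>
      / (INR N) ^ 2 *
        sum1 (N - 1) (fun h =>
          (cot (PI * INR h * INR w / INR N)) ^ 2 / (INR h) ^ 2))
  = (INR N - 2) / (3 * (INR N) ^ 2) * H (N - 1) 2.
Proof.
  intros Hp. pose proof (prime_ge_2 _ Hp) as HN2.
  assert (HN : 2 <= INR N) by (apply (le_INR 2); lia).
  rewrite sum1_scal, sum1_swap.
  rewrite (sum1_ext _ _ (fun h => (INR N - 1) * (INR N - 2) / 3 * / INR h ^ 2)).
  - unfold H. rewrite sum1_scal, minus_INR by lia. simpl INR. field. lra.
  - intros h Hh.
    assert (Hcop : rel_prime (Z.of_nat N) (Z.of_nat h))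
      by (apply rel_prime_sym, rel_prime_le_prime; [assumption|lia]).
    rewrite <- (sum_cot_sq N h), (Rmult_comm _ (/ INR h ^ 2)), <- sum1_scal
      by (lia || assumption).
    apply sum1_ext. intros w _. field. apply not_0_INR. lia.
Qed.

Lemma weighted_harmonic2_le N : (2 <= N)%nat ->
  (INR N - 2) / (3 * (INR N) ^ 2) * H (N - 1) 2 <= PI ^ 2 / (18 * INR N).
Proof.
  intros HN2. assert (HN : 2 <= INR N) by (apply (le_INR 2); lia).
  pose proof PI_RGT_0 as Hpi.
  apply Rle_trans with ((INR N - 2) / (3 * INR N ^ 2) * (PI ^ 2 / 6)).
  - apply Rmult_le_compat_l; [|apply harmonic2_le].
    apply Rmult_le_pos; [lra|apply Rlt_le, Rinv_0_lt_compat; nra].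
  - assert (PI ^ 2 / (18 * INR N) - (INR N - 2) / (3 * INR N ^ 2) * (PI ^ 2 / 6)
            = PI ^ 2 / (9 * INR N ^ 2)) by (field; lra).
    assert (0 < PI ^ 2 / (9 * INR N ^ 2)) by (apply Rdiv_lt_0_compat; nra).
    lra.
Qed.

Theorem lemma3 (N : nat) (hN : (3 <= N)%nat) (hp : prime (Z.of_nat N)) :
  / INR (N - 1) *
    sum1 (N - 1) (fun w =>
      / (INR N) ^ 2 *
        sum1 (N - 1) (fun h =>
          (cot (PI * INR h * INR w / INR N)) ^ 2 / (INR h) ^ 2))
  = (INR N - 2) / (3 * (INR N) ^ 2) * H (N - 1) 2
  /\ (INR N - 2) / (3 * (INR N) ^ 2) * H (N - 1) 2 <= PI ^ 2 / (18 * INR N).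
Proof.
  split.
  - apply weighted_cot_sq_mean, hp.
  - apply weighted_harmonic2_le. lia.
Qed.
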